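(* Assume (A1)–(A2). Let $\eta>0$, $x_t\in\mathcal X$, $y_t:=q(x_t)$, and let $g_t\in\mathbb R^d$ be any vector with $\|g_t\|_2\le\hat G_F$ for some $\hat G_F>0$. Set $\tilde g_t:=J_q(x_t)^{-\top}g_t$ and define $$y_{t+1}=\arg\min_{y\in\mathcal Y}\Big\{\tilde g_t^\top(y-y_t)+\tfrac1\eta D_R(y\|y_t)\Big\},\qquad x_{t+1}=\arg\min_{x\in\mathcal X}\Big\{g_t^\top(x-x_t)+\tfrac1{2\eta}\|x-x_t\|_2^2\Big\}.$$ Then $$\|y_{t+1}-q(x_{t+1})\|_2\le G^5\big(5\hat G_F^2+\hat G_F^3\eta\big)\eta^2.$$
   Context: $\mathcal X,\mathcal Y\subset\mathbb R^d$ are convex compact sets and $q:\mathcal X\to\mathcal Y$ is a smooth bijection with Jacobian $J_q(x)$; $M^{-\top}$ denotes the inverse transpose. Bregman divergence $D_R(x\|y)=R(x)-R(y)-\nabla R(y)^\top(x-y)$. (A1) There is a twice continuously differentiable, strictly convex $R:\mathcal Y\to\mathbb R$ such that $[\nabla^2R(q(x))]^{-1}=J_q(x)J_q(x)^\top$ for all $x\in\mathcal X$. (A2) There is $G>1$ such that: $q$ is $G$-Lipschitz on $\mathcal X$; the first and second derivatives of $q^{-1}$ are bounded by $G$; $R$ is $1$-strongly convex (Euclidean norm) and smooth with first and third derivatives bounded by $G$; for every $z\in\mathcal Y$ the map $w\mapsto D_R(z\|w)$ is $G$-Lipschitz. *)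

From HB Require Import structures.
From mathcomp Require Import all_boot all_order all_algebra.
From mathcomp Require Import all_classical all_reals all_analysis.
Set Implicit Arguments. Unset Strict Implicit. Unset Printing Implicit Defensive.
Import Order.TTheory GRing.Theory Num.Theory.
Import numFieldNormedType.Exports.
Local Open Scope ring_scope.
Local Open Scope classical_set_scope.

Section Defs.
Context {R : realType} {d : nat}.

Definition dotv (u v : 'rV[R]_d) : R := \sum_(i < d) u 0 i * v 0 i.
Definition enorm (u : 'rV[R]_d) : R := Num.sqrt (dotv u u).

Definition ebasis (i : 'I_d) : 'rV[R]_d := delta_mx 0 i.

Definition convex_set_rV (X : set 'rV[R]_d) : Prop :=
  forall x y t, X x -> X y -> 0 <= t <= 1 -> X (t *: x + (1 - t) *: y).

Definition iterD {W : normedModType R} (vs : seq 'rV[R]_d)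
  (f : 'rV[R]_d -> W) : 'rV[R]_d -> W :=
  foldr (fun v g => 'D_v g) f vs.

Definition smooth {W : normedModType R} (f : 'rV[R]_d -> W) : Prop :=
  forall (vs : seq 'rV[R]_d) (x : 'rV[R]_d), differentiable (iterD vs f) x.

Definition grad (f : 'rV[R]_d -> R) (y : 'rV[R]_d) : 'rV[R]_d :=
  \row_i 'D_(ebasis i) f y.
Definition hess (f : 'rV[R]_d -> R) (y : 'rV[R]_d) : 'M[R]_d :=
  \matrix_(i, j) 'D_(ebasis j) ('D_(ebasis i) f) y.

(* Jacobian in the usual convention: (Jac q x) i j = d q_i / d x_j.
   (MathComp's 'J q x is the transpose, since it acts on row vectors.) *)
Definition Jac (q : 'rV[R]_d -> 'rV[R]_d) (x : 'rV[R]_d) : 'M[R]_d :=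
  ('J q x)^T.

Definition bregman (F : 'rV[R]_d -> R) (x y : 'rV[R]_d) : R :=
  F x - F y - dotv (grad F y) (x - y).

End Defs.

From HB Require Import structures.
From mathcomp Require Import all_boot all_order all_algebra.
From mathcomp Require Import all_classical all_reals all_analysis.
From mathcomp Require Import ring lra.
Set Implicit Arguments. Unset Strict Implicit. Unset Printing Implicit Defensive.
Import Order.TTheory GRing.Theory Num.Theory.
Import numFieldNormedType.Exports.
Local Open Scope ring_scope.
Local Open Scope classical_set_scope.

(* The gradient step x1 minimises prox_obj x = g.(x - xt) + |x - xt|^2 / (2 eta) over X and
   the mirror step y1 minimises mirror_obj y = g~.(y - yt) + D_R(y || yt) / eta over Y; both
   are (1/eta)-strongly convex, so by quadratic growth at the minimisers the gap function
   E = mirror_obj - prox_obj o q^-1 increases from y1 to q x1 by at least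
   (|q x1 - y1|^2 + |x1 - q^-1 y1|^2) / (2 eta).
   Conversely, the chain rule gives D q^-1 (yt) = J_q(xt)^-1, so that g~.v = g.(D q^-1(yt) v)
   and (A1) reads D^2 R(yt)[v, w] = (D q^-1(yt) v).(D q^-1(yt) w): the derivative of E
   vanishes at yt. Taylor expansion of D R, q^-1 and D q^-1 around yt bounds the slope of E
   by O(eta) on the ball of radius G Ghat eta around yt, which contains y1 and q x1. The mean
   value theorem on [y1, q x1] and |q x1 - y1| <= G |x1 - q^-1 y1| conclude. *)

Section Euclidean.
Context {R : realType} {d : nat}.
Implicit Types u v w y z : 'rV[R]_d.

Lemma dotvC u v : dotv u v = dotv v u.
Proof. by apply: eq_bigr => i _; rewrite mulrC. Qed.

Lemma dotvDl u v w : dotv (u + v) w = dotv u w + dotv v w.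
Proof. by rewrite /dotv -big_split; apply: eq_bigr => i _; rewrite mxE mulrDl. Qed.

Lemma dotvZl a u w : dotv (a *: u) w = a * dotv u w.
Proof. by rewrite /dotv mulr_sumr; apply: eq_bigr => i _; rewrite mxE mulrA. Qed.

Lemma dotvNl u w : dotv (- u) w = - dotv u w.
Proof. by rewrite -scaleN1r dotvZl mulN1r. Qed.

Lemma dotvBl u v w : dotv (u - v) w = dotv u w - dotv v w.
Proof. by rewrite dotvDl dotvNl. Qed.

Lemma dotvDr u v w : dotv w (u + v) = dotv w u + dotv w v.
Proof. by rewrite dotvC dotvDl !(dotvC w). Qed.

Lemma dotvZr a u w : dotv w (a *: u) = a * dotv w u.
Proof. by rewrite dotvC dotvZl dotvC. Qed.

Lemma dotvNr u w : dotv w (- u) = - dotv w u.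
Proof. by rewrite dotvC dotvNl dotvC. Qed.

Lemma dotvBr u v w : dotv w (u - v) = dotv w u - dotv w v.
Proof. by rewrite dotvDr dotvNr. Qed.

Lemma dotv0r w : dotv w 0 = 0.
Proof. by rewrite -(scale0r 0) dotvZr mul0r. Qed.

Lemma dotv_mx u v : dotv u v = (u *m v^T) 0 0.
Proof. by rewrite mxE; apply: eq_bigr => i _; rewrite mxE. Qed.

Lemma dotvv_ge0 u : 0 <= dotv u u.
Proof. by apply: sumr_ge0 => i _; rewrite -expr2 sqr_ge0. Qed.

Lemma enorm_ge0 u : 0 <= enorm u.
Proof. exact: sqrtr_ge0. Qed.

Lemma sqr_enorm u : enorm u ^+ 2 = dotv u u.
Proof. by rewrite sqr_sqrtr // dotvv_ge0. Qed.

Lemma enormZ a u : enorm (a *: u) = `|a| * enorm u.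
Proof. by rewrite /enorm dotvZl dotvZr mulrA -expr2 sqrtrM ?sqr_ge0 // sqrtr_sqr. Qed.

Lemma enormN u : enorm (- u) = enorm u.
Proof. by rewrite -scaleN1r enormZ normrN1 mul1r. Qed.

Lemma enorm_distC u v : enorm (u - v) = enorm (v - u).
Proof. by rewrite -enormN opprB. Qed.

Lemma enorm0 : enorm (0 : 'rV[R]_d) = 0.
Proof. by rewrite /enorm dotv0r sqrtr0. Qed.

Lemma enorm_eq0 u : (enorm u == 0) = (u == 0).
Proof.
apply/idP/eqP => [|->]; last by rewrite enorm0.
rewrite sqrtr_eq0 le_eqVlt ltNge dotvv_ge0 orbF psumr_eq0; last first.
  by move=> i _; rewrite -expr2 sqr_ge0.
move=> /allP u0; apply/rowP => i.
by have := u0 i (mem_index_enum i); rewrite mxE -expr2 sqrf_eq0 => /eqP.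
Qed.

Lemma dotv_le_enorm u v : dotv u v <= enorm u * enorm v.
Proof.
have [->|u0] := eqVneq u 0; first by rewrite dotvC dotv0r enorm0 mul0r.
have [->|v0] := eqVneq v 0; first by rewrite dotv0r enorm0 mulr0.
have a0 : 0 < enorm u by rewrite lt_def enorm_eq0 u0 enorm_ge0.
have b0 : 0 < enorm v by rewrite lt_def enorm_eq0 v0 enorm_ge0.
have := dotvv_ge0 (enorm v *: u - enorm u *: v).
rewrite dotvBl !dotvBr !dotvZl !dotvZr -!sqr_enorm (dotvC v u) => h.
have : 0 <= 2 * enorm u * enorm v * (enorm u * enorm v - dotv u v) by lra.
by rewrite pmulr_rge0 ?subr_ge0 // !mulr_gt0.
Qed.

Lemma normr_dotv_le u v : `|dotv u v| <= enorm u * enorm v.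
Proof.
by rewrite ler_norml dotv_le_enorm andbT lerNl -dotvNl -(enormN u) dotv_le_enorm.
Qed.

Lemma normr_dotv_le_mul u v a b :
  enorm u <= a -> enorm v <= b -> `|dotv u v| <= a * b.
Proof.
by move=> ua vb; apply: le_trans (normr_dotv_le u v) (ler_pM _ _ ua vb); rewrite enorm_ge0.
Qed.

Lemma ler_enormD u v : enorm (u + v) <= enorm u + enorm v.
Proof.
rewrite -(@ler_pXn2r _ 2) ?nnegrE ?addr_ge0 ?enorm_ge0 //.
rewrite sqr_enorm dotvDl !dotvDr -!sqr_enorm (dotvC v u).
have := dotv_le_enorm u v; nra.
Qed.

Lemma enorm_le_dotv u M : 0 <= M -> (forall c, dotv c u <= M * enorm c) ->
  enorm u <= M.
Proof.
move=> M0 uM; have [->|u0] := eqVneq u 0; first by rewrite enorm0.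
have u_gt0 : 0 < enorm u by rewrite lt_def enorm_eq0 u0 enorm_ge0.
by rewrite -(ler_pM2r u_gt0) -expr2 sqr_enorm.
Qed.

Lemma convex_combE (t : R) z y : t *: z + (1 - t) *: y = y + t *: (z - y).
Proof. by rewrite scalerBl scale1r scalerBr addrCA addrA addrAC. Qed.

End Euclidean.

Section RealCalculus.
Context {R : realType}.
Implicit Types (f df ddf : R -> R) (a b t M : R).

Lemma ler_sub_of_derive_le f df a b M : a <= b ->
  (forall t, is_derive t 1 f (df t)) -> (forall t, a <= t <= b -> df t <= M) ->
  f b - f a <= M * (b - a).
Proof.
move=> ab fdf dfM.
have cf : {within `[a, b], continuous f}.
  apply: continuous_subspaceT => x.
  by apply/differentiable_continuous/derivable1_diffP; have [] := fdf x.
have [c] := MVT_segment ab (fun x _ => fdf x) cf.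
rewrite in_itv /= => /dfM cM ->.
by rewrite ler_wpM2r // subr_ge0.
Qed.

Lemma normr_sub_le_of_derive f df M :
  (forall t, is_derive t 1 f (df t)) -> (forall t, 0 <= t <= 1 -> `|df t| <= M) ->
  `|f 1 - f 0| <= M.
Proof.
move=> fdf dfM.
have /(ler_sub_of_derive_le ler01 fdf) : forall t, 0 <= t <= 1 -> df t <= M.
  by move=> t /dfM; rewrite ler_norml => /andP[].
have /(ler_sub_of_derive_le ler01 (fun t => is_deriveN (fdf t))) :
    forall t, 0 <= t <= 1 -> (- df) t <= M.
  by move=> t /dfM; rewrite ler_norml lerNl => /andP[].
rewrite !opprfctE ler_norml; lra.
Qed.

Lemma taylor1_le f df ddf M :
  (forall t, is_derive t 1 f (df t)) -> (forall t, is_derive t 1 df (ddf t)) ->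
  (forall t, 0 <= t <= 1 -> ddf t <= M) -> f 1 - f 0 - df 0 <= M / 2.
Proof.
move=> fdf dfddf ddfM.
pose k s := f s - s * df 0 - M / 2 * s ^+ 2.
have kdk t : is_derive t 1 k (df t - df 0 - M * t).
  have fdf_t := fdf t; apply: is_derive_eq.
  by rewrite /GRing.scale /= mulr0 add0r !mulr1; field.
have dk_le0 t : 0 <= t <= 1 -> df t - df 0 - M * t <= 0.
  move=> /andP[t0 t1].
  have ddf_le s : 0 <= s <= t -> ddf s <= M.
    by move=> /andP[s0 st]; apply: ddfM; rewrite s0 (le_trans st t1).
  have := ler_sub_of_derive_le t0 dfddf ddf_le; lra.
have := @ler_sub_of_derive_le k _ 0 1 0 ler01 kdk dk_le0.
rewrite /k expr1n expr0n /=; lra.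
Qed.

Lemma normr_taylor1_le f df ddf M :
  (forall t, is_derive t 1 f (df t)) -> (forall t, is_derive t 1 df (ddf t)) ->
  (forall t, 0 <= t <= 1 -> `|ddf t| <= M) -> `|f 1 - f 0 - df 0| <= M / 2.
Proof.
move=> fdf dfddf ddfM.
have /(taylor1_le fdf dfddf) : forall t, 0 <= t <= 1 -> ddf t <= M.
  by move=> t /ddfM; rewrite ler_norml => /andP[].
have /(taylor1_le (fun t => is_deriveN (fdf t)) (fun t => is_deriveN (dfddf t))) :
    forall t, 0 <= t <= 1 -> (- ddf) t <= M.
  by move=> t /ddfM; rewrite ler_norml lerNl => /andP[].
rewrite !opprfctE ler_norml; lra.
Qed.

End RealCalculus.

Section RealInequalities.
Context {R : realType}.

Lemma le_of_forall_onem_mul (K A : R) :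
  (forall t, 0 < t < 1 -> (1 - t) * K <= A) -> K <= A.
Proof.
move=> KA; apply/ler_addgt0Pr => e e0.
have [K0|K0] := lerP K 0.
  have half : 0 < (2^-1 : R) < 1 by rewrite invr_gt0 invf_lt1 ?ltr0n ?ltr1n.
  by have := KA _ half; lra.
have t01 : 0 < e / (e + K) < 1.
  by rewrite divr_gt0 ?addr_gt0 //= ltr_pdivrMr ?addr_gt0 // mul1r ltrDl.
have := KA _ t01.
have -> : (1 - e / (e + K)) * K = K - e * K / (e + K) by field; rewrite gt_eqF ?addr_gt0.
have : e * K / (e + K) <= e by rewrite ler_pdivrMr ?addr_gt0 // ler_pM2l // lerDr ltW.
lra.
Qed.

Lemma le_mul_of_sqr_div_le (n c e : R) : 0 <= n -> 0 <= c -> 0 < e ->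
  n ^+ 2 / e <= c * n -> n <= c * e.
Proof.
move=> n0 c0 e0; have [->|n_neq0] := eqVneq n 0 => [_|]; first exact: mulr_ge0 c0 (ltW e0).
have n_gt0 : 0 < n by rewrite lt_def n_neq0.
by rewrite expr2 mulrAC ler_pM2r // ler_pdivrMr.
Qed.

Lemma le_of_sqr_add_sqr_le (a b c K : R) : 0 <= a -> 0 <= K ->
  a <= c * b -> a ^+ 2 + b ^+ 2 <= K * a -> a <= K * c ^+ 2 / (c ^+ 2 + 1).
Proof.
move=> a0 K0 acb abK.
have c1 : 0 < c ^+ 2 + 1 by rewrite ltr_pwDr ?sqr_ge0.
apply: le_mul_of_sqr_div_le => //; last rewrite invrK.
- by rewrite mulr_ge0 ?sqr_ge0.
- by rewrite invr_gt0.
have : a ^+ 2 <= (c * b) ^+ 2 by rewrite ler_sqr ?nnegrE ?(le_trans a0 acb).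
nra.
Qed.

End RealInequalities.

Section Directional.
Context {R : realType} {d : nat}.
Local Notation V := 'rV[R]_d.
Implicit Types (a b c p v w y : V) (t M : R).

Lemma smooth_differentiable (W : normedModType R) (f : V -> W) y :
  smooth f -> differentiable f y.
Proof. by move=> /(_ [::] y). Qed.

Lemma smooth_differentiableD (W : normedModType R) (f : V -> W) v y :
  smooth f -> differentiable ('D_v f) y.
Proof. by move=> /(_ [:: v] y). Qed.

Lemma smooth_differentiableDD (W : normedModType R) (f : V -> W) v w y :
  smooth f -> differentiable ('D_w ('D_v f)) y.
Proof. by move=> /(_ [:: w; v] y). Qed.

Lemma convex_segment (S : set V) a b t : convex_set_rV S -> S a -> S b ->
  0 <= t <= 1 -> S (a + t *: (b - a)).
Proof.
by move=> cS Sa Sb t01; rewrite -convex_combE; exact: cS.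
Qed.

Lemma is_derive_line (W : normedModType R) (f : V -> W) p w t :
  derivable f (p + t *: w) w ->
  is_derive t 1 (fun s => f (p + s *: w)) ('D_w f (p + t *: w)).
Proof.
move=> df.
have E : (fun h : R => h^-1 *: (((fun s => f (p + s *: w)) \o shift t) (h *: 1)
            - f (p + t *: w))) =
         (fun h : R => h^-1 *: ((f \o shift (p + t *: w)) (h *: w) - f (p + t *: w))).
  apply/funext => h /=; congr (_ *: (f _ - _)).
  by rewrite [h%:A]mulr1 scalerDl addrCA addrA.
by split; rewrite /derivable /derive E.
Qed.

Lemma is_derive_entry m n (F : V -> 'M[R]_(m, n)) y w i j : derivable F y w ->
  is_derive y w (fun z => F z i j) ('D_w F y i j).
Proof.
move=> dF; split; first by move/derivable_mxP : dF.
by rewrite derive_mx // mxE.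
Qed.

Lemma is_derive_dotv c (F : V -> V) y w dF : is_derive y w F dF ->
  is_derive y w (fun z => dotv c (F z)) (dotv c dF).
Proof.
move=> [dFy <-].
have -> : (fun z => dotv c (F z)) = \sum_(i < d) (fun z => c 0 i * F z 0 i).
  by rewrite fct_sumE.
apply: is_derive_sum => i.
have Fi := is_derive_entry 0 i dFy.
by apply: is_derive_eq.
Qed.

Lemma derive_dotv c (F : V -> V) y v : derivable F y v ->
  'D_v (fun z => dotv c (F z)) y = dotv c ('D_v F y).
Proof. by move=> dF; exact/derive_val/is_derive_dotv/derivableP. Qed.

Lemma derivable_dotv c (F : V -> V) y v : derivable F y v ->
  derivable (fun z => dotv c (F z)) y v.
Proof. by move=> /derivableP /(is_derive_dotv c) []. Qed.

Lemma is_derive_sqr_enorm (F : V -> V) y w dF : is_derive y w F dF ->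
  is_derive y w (fun z => enorm (F z) ^+ 2) (2 * dotv (F y) dF).
Proof.
move=> [dFy <-].
have -> : (fun z => enorm (F z) ^+ 2) = \sum_(i < d) (fun z => F z 0 i * F z 0 i).
  by rewrite fct_sumE; apply/funext => z; rewrite sqr_enorm.
rewrite /dotv mulr_sumr; apply: is_derive_sum => i.
have Fi := is_derive_entry 0 i dFy.
by apply: is_derive_eq; rewrite /GRing.scale /=; ring.
Qed.

Lemma derive_basis (W : normedModType R) (f : V -> W) y w : differentiable f y ->
  'D_w f y = \sum_(j < d) w 0 j *: 'D_(ebasis j) f y.
Proof.
move=> df; rewrite deriveE // {1}(row_sum_delta w) linear_sum.
by apply: eq_bigr => j _; rewrite linearZ /= -deriveE.
Qed.

Lemma dotv_grad (f : V -> R) y v : differentiable f y -> dotv (grad f y) v = 'D_v f y.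
Proof.
by move=> df; rewrite (derive_basis v df); apply: eq_bigr => j _; rewrite mxE mulrC.
Qed.

Lemma derive2_hess (f : V -> R) v w y : smooth f ->
  'D_w ('D_v f) y = (v *m hess f y *m w^T) 0 0.
Proof.
move=> sf.
have -> : 'D_v f = \sum_(i < d) (fun z => v 0 i * 'D_(ebasis i) f z).
  rewrite fct_sumE; apply/funext => z.
  by rewrite (derive_basis v (smooth_differentiable z sf)).
have Di i : is_derive y w (fun z => v 0 i * 'D_(ebasis i) f z)
    (v 0 i * 'D_w ('D_(ebasis i) f) y).
  have Dfi : is_derive y w ('D_(ebasis i) f) ('D_w ('D_(ebasis i) f) y).
    exact/derivableP/diff_derivable/smooth_differentiableD.
  by apply: is_derive_eq.
have [_ ->] := is_derive_sum Di; rewrite mxE.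
under [RHS]eq_bigr => j _ do rewrite !mxE big_distrl /=.
rewrite exchange_big /=; apply: eq_bigr => i _.
rewrite (derive_basis w (smooth_differentiableD _ _ sf)) mulr_sumr.
by apply: eq_bigr => j _; rewrite !mxE /GRing.scale /=; ring.
Qed.

Lemma derive_segment_eq (W : normedModType R) (f g : V -> W) p w :
  (forall t, 0 < t < 1 -> f (p + t *: w) = g (p + t *: w)) -> f p = g p ->
  derivable f p w -> derivable g p w -> 'D_w f p = 'D_w g p.
Proof.
move=> fg fgp df dg.
have Df := cvg_dnbhs_at_right df; have Dg := cvg_dnbhs_at_right dg.
suff Dfg : (fun h => h^-1 *: ((f \o shift p) (h *: w) - f p)) @ 0^'+ --> 'D_w g p.
  exact: (cvg_unique _ Df Dfg).
apply: cvg_trans Dg; apply: near_eq_cvg; near=> t.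
have t01 : 0 < t < 1.
  by apply/andP; split; near: t; [exact: nbhs_right_gt | exact/nbhs_right_lt/ltr01].
by rewrite /= [_ + p]addrC -(fg t t01) -fgp.
Unshelve. all: by end_near.
Qed.

Lemma derive_right_inverse (q qinv : V -> V) (S : set V) a b :
  convex_set_rV S -> S a -> S b -> (forall y, S y -> q (qinv y) = y) ->
  differentiable qinv a -> differentiable q (qinv a) ->
  'D_(b - a) qinv a *m 'J q (qinv a) = b - a.
Proof.
move=> cS Sa Sb qK dqinv dq.
have dc : differentiable (q \o qinv) a by apply: differentiable_comp.
have <- : 'D_(b - a) (q \o qinv) a = 'D_(b - a) qinv a *m 'J q (qinv a).
  by rewrite deriveE // diff_comp //= deriveE // /jacobian mul_rV_lin1.
rewrite -[RHS](derive_id a (b - a)); apply: derive_segment_eq.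
- move=> t /andP[t0 t1]; apply: qK; apply: convex_segment => //.
  by rewrite !ltW.
- exact: qK.
- exact: diff_derivable.
- exact: diff_derivable.
Qed.

Lemma line_sub_le (f : V -> R) a b M : (forall y, derivable f y (b - a)) ->
  (forall t, 0 <= t <= 1 -> 'D_(b - a) f (a + t *: (b - a)) <= M) ->
  f b - f a <= M.
Proof.
move=> df fM.
have := @ler_sub_of_derive_le _ (fun t => f (a + t *: (b - a))) _ 0 1 M ler01
  (fun t => is_derive_line (df _)) fM.
by rewrite /= scale1r scale0r addr0 subr0 mulr1 subrKC.
Qed.

Lemma normr_line_sub_le (f : V -> R) a b M : (forall y, derivable f y (b - a)) ->
  (forall t, 0 <= t <= 1 -> `|'D_(b - a) f (a + t *: (b - a))| <= M) ->
  `|f b - f a| <= M.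
Proof.
move=> df fM.
have := @normr_sub_le_of_derive _ (fun t => f (a + t *: (b - a))) _ M
  (fun t => is_derive_line (df _)) fM.
by rewrite /= scale1r scale0r addr0 subrKC.
Qed.

Lemma normr_line_taylor1_le (f : V -> R) a b M :
  (forall y, derivable f y (b - a)) -> (forall y, derivable ('D_(b - a) f) y (b - a)) ->
  (forall t, 0 <= t <= 1 -> `|'D_(b - a) ('D_(b - a) f) (a + t *: (b - a))| <= M) ->
  `|f b - f a - 'D_(b - a) f a| <= M / 2.
Proof.
move=> df ddf fM.
have := @normr_taylor1_le _ (fun t => f (a + t *: (b - a)))
  (fun t => 'D_(b - a) f (a + t *: (b - a))) _ M
  (fun t => is_derive_line (df _)) (fun t => is_derive_line (ddf _)) fM.
by rewrite /= scale1r scale0r addr0 subrKC.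
Qed.

Lemma enorm_line_sub_le (F : V -> V) a b M : 0 <= M ->
  (forall y, derivable F y (b - a)) ->
  (forall t, 0 <= t <= 1 -> enorm ('D_(b - a) F (a + t *: (b - a))) <= M) ->
  enorm (F b - F a) <= M.
Proof.
move=> M0 dF FM; apply: enorm_le_dotv => // c.
rewrite dotvBr mulrC; apply: le_trans (ler_norm _) _.
apply: (normr_line_sub_le (f := fun z => dotv c (F z))) => [y|t t01].
  exact: derivable_dotv.
rewrite derive_dotv //; apply: le_trans (normr_dotv_le _ _) _.
by rewrite ler_wpM2l ?enorm_ge0 ?FM.
Qed.

Lemma enorm_line_taylor1_le (F : V -> V) a b M : 0 <= M ->
  (forall y, derivable F y (b - a)) -> (forall y, derivable ('D_(b - a) F) y (b - a)) ->
  (forall t, 0 <= t <= 1 ->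
    enorm ('D_(b - a) ('D_(b - a) F) (a + t *: (b - a))) <= M) ->
  enorm (F b - F a - 'D_(b - a) F a) <= M / 2.
Proof.
move=> M0 dF ddF FM; apply: enorm_le_dotv => [|c]; first by rewrite divr_ge0.
have DcF : 'D_(b - a) (fun z => dotv c (F z)) = (fun y => dotv c ('D_(b - a) F y)).
  by apply/funext => y; exact: derive_dotv.
rewrite !dotvBr mulrAC [M * _]mulrC; apply: le_trans (ler_norm _) _.
rewrite -derive_dotv //.
apply: (normr_line_taylor1_le (f := fun z => dotv c (F z))) => [y|y|t t01].
- exact: derivable_dotv.
- by rewrite DcF; exact: derivable_dotv.
- rewrite DcF derive_dotv //; apply: le_trans (normr_dotv_le _ _) _.
  by rewrite ler_wpM2l ?enorm_ge0 ?FM.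
Qed.

End Directional.

Section Gram.
Context {R : realType} {d : nat}.
Implicit Types (H M : 'M[R]_d) (g v w : 'rV[R]_d).

Lemma gram_invmx H M : H \in unitmx -> invmx H = M^T *m M ->
  M \in unitmx /\ H = invmx M *m (invmx M)^T.
Proof.
move=> uH HM.
have uM : M \in unitmx.
  by move: (unitmx_inv H); rewrite uH HM unitmx_mul => /andP[].
split => //.
have e1 : H *m (M^T *m M) = 1%:M by rewrite -HM mulmxV.
have e2 : (M^T *m M) *m (invmx M *m (invmx M)^T) = 1%:M.
  by rewrite -mulmxA (mulmxA M) mulmxV // mul1mx -trmx_mul mulVmx // trmx1.
by rewrite -[H]mulmx1 -e2 mulmxA e1 mul1mx.
Qed.

Lemma dotv_trmx_invmx M g v :
  dotv (((invmx M^T)^T *m g^T)^T) v = dotv g (v *m invmx M).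
Proof. by rewrite trmx_mul trmxK -trmx_inv trmxK !dotv_mx trmx_mul mulmxA. Qed.

Lemma dotv_gram M v w :
  (v *m (M *m M^T) *m w^T) 0 0 = dotv (v *m M) (w *m M).
Proof. by rewrite dotv_mx trmx_mul !mulmxA. Qed.

End Gram.

Section StrongConvexity.
Context {R : realType} {d : nat}.
Local Notation V := 'rV[R]_d.
Implicit Types (S : set V) (F : V -> R) (a p y z : V) (mu t : R).

Definition strongly_convex_on S mu F := forall z y t, S z -> S y -> 0 <= t <= 1 ->
  F (t *: z + (1 - t) *: y) <=
    t * F z + (1 - t) * F y - t * (1 - t) * mu / 2 * enorm (z - y) ^+ 2.

Lemma strongly_convex_first_order S mu F (D : V -> V) : convex_set_rV S ->
  (forall x y, S x -> S y ->
    F y + dotv (D y) (x - y) + mu / 2 * enorm (x - y) ^+ 2 <= F x) ->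
  strongly_convex_on S mu F.
Proof.
move=> cS FD z y t Sz Sy t01; have /andP[t0 t1] := t01.
set m := t *: z + (1 - t) *: y.
have Sm : S m by exact: cS.
have zm : z - m = (1 - t) *: (z - y).
  by rewrite /m convex_combE scalerBl scale1r opprD addrA.
have ym : y - m = - (t *: (z - y)) by rewrite /m convex_combE opprD addrA subrr add0r.
have := FD z m Sz Sm; have := FD y m Sy Sm.
rewrite zm ym enormN !enormZ !dotvNr !dotvZr !exprMn !real_normK ?num_real //.
have t1' : 0 <= 1 - t by rewrite subr_ge0.
move=> /(ler_wpM2l t1') ? /(ler_wpM2l t0) ?; lra.
Qed.

Lemma strongly_convex_affine S mu F c a b : 0 <= c -> strongly_convex_on S mu F ->
  strongly_convex_on S (c * mu) (fun y => c * F y + dotv a y + b).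
Proof.
move=> c0 sF z y t Sz Sy t01.
have := ler_wpM2l c0 (sF z y t Sz Sy t01).
rewrite dotvDr !dotvZr; lra.
Qed.

Lemma sqr_enorm_convex_comb t (u v : V) :
  enorm (t *: u + (1 - t) *: v) ^+ 2 =
    t * enorm u ^+ 2 + (1 - t) * enorm v ^+ 2 - t * (1 - t) * enorm (u - v) ^+ 2.
Proof.
rewrite !sqr_enorm !(dotvDl, dotvDr, dotvNl, dotvNr, dotvZl, dotvZr) (dotvC v u).
ring.
Qed.

Lemma strongly_convex_sqr_dist S p : strongly_convex_on S 2 (fun x => enorm (x - p) ^+ 2).
Proof.
move=> z y t _ _ _.
have -> : t *: z + (1 - t) *: y - p = t *: (z - p) + (1 - t) *: (y - p).
  by rewrite !scalerBr addrACA -opprD -scalerDl subrKC scale1r.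
have -> : z - y = (z - p) - (y - p) by rewrite opprB addrA subrK.
rewrite sqr_enorm_convex_comb; lra.
Qed.

Lemma strongly_convex_min_growth S mu F y0 : convex_set_rV S ->
  strongly_convex_on S mu F -> S y0 -> (forall z, S z -> F y0 <= F z) ->
  forall z, S z -> mu / 2 * enorm (z - y0) ^+ 2 <= F z - F y0.
Proof.
move=> cS sF Sy0 y0_min z Sz; apply: le_of_forall_onem_mul => t /andP[t0 t1].
have t01 : 0 <= t <= 1 by rewrite !ltW.
have h := le_trans (y0_min _ (cS _ _ _ Sz Sy0 t01)) (sF _ _ _ Sz Sy0 t01).
rewrite -(ler_pM2l t0); lra.
Qed.

End StrongConvexity.

Section MirrorVersusGradientStep.
Context {R : realType} {d : nat}.
Local Notation V := 'rV[R]_d.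
Variables (X Y : set V) (q qinv : V -> V) (Rf : V -> R) (G eta Ghat : R) (xt g y1 x1 : V).
Local Notation yt := (q xt).
Local Notation gt := (((invmx (Jac q xt))^T *m g^T)^T).
Local Notation P := (invmx ('J q xt)).

Hypotheses (cX : convex_set_rV X) (cY : convex_set_rV Y) (sq : smooth q).
Hypotheses (qXY : forall x, X x -> Y (q x)) (qinvYX : forall y, Y y -> X (qinv y)).
Hypotheses (qK : forall x, X x -> qinv (q x) = x) (qinvK : forall y, Y y -> q (qinv y) = y).
Hypotheses (sR : smooth Rf) (hessR : forall x, X x -> hess Rf (q x) \in unitmx /\
  invmx (hess Rf (q x)) = Jac q x *m (Jac q x)^T).
Hypotheses (G1 : 1 < G)
  (qLip : forall x x', X x -> X x' -> enorm (q x - q x') <= G * enorm (x - x'))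
  (sqinv : smooth qinv)
  (Dqinv_le : forall y u, Y y -> enorm ('D_u qinv y) <= G * enorm u)
  (DDqinv_le : forall y u v, Y y -> enorm ('D_v ('D_u qinv) y) <= G * enorm u * enorm v)
  (Rsc : forall x y, Y x -> Y y ->
     Rf x >= Rf y + dotv (grad Rf y) (x - y) + 2^-1 * enorm (x - y) ^+ 2)
  (DDDR_le : forall y u v w, Y y ->
     `|'D_w ('D_v ('D_u Rf)) y| <= G * enorm u * enorm v * enorm w).
Hypotheses (eta0 : 0 < eta) (Xxt : X xt) (Ghat0 : 0 < Ghat) (gB : enorm g <= Ghat).
Hypotheses (Yy1 : Y y1) (y1_min : forall y, Y y ->
  dotv gt (y1 - yt) + eta^-1 * bregman Rf y1 yt
    <= dotv gt (y - yt) + eta^-1 * bregman Rf y yt).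
Hypotheses (Xx1 : X x1) (x1_min : forall x, X x ->
  dotv g (x1 - xt) + (2 * eta)^-1 * enorm (x1 - xt) ^+ 2
    <= dotv g (x - xt) + (2 * eta)^-1 * enorm (x - xt) ^+ 2).

Let Yyt : Y yt := qXY Xxt.
Let G0 : 0 < G := lt_trans ltr01 G1.
Let dqinv y : differentiable qinv y := smooth_differentiable y sqinv.

Let gram_yt : 'J q xt \in unitmx /\ hess Rf yt = P *m P^T.
Proof. by have [uH] := hessR Xxt; rewrite /Jac trmxK; exact: gram_invmx. Qed.

Lemma unitmx_Jq : 'J q xt \in unitmx.
Proof. exact: gram_yt.1. Qed.

Lemma hess_yt : hess Rf yt = P *m P^T.
Proof. exact: gram_yt.2. Qed.

Lemma Dqinv_yt y z : Y y -> Y z -> 'D_(y - z) qinv yt = (y - z) *m P.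
Proof.
have D0 u : Y u -> 'D_(u - yt) qinv yt = (u - yt) *m P.
  move=> Yu; have := derive_right_inverse cY Yyt Yu qinvK (dqinv _)
    (smooth_differentiable _ sq).
  by rewrite qK // => E; rewrite -(mulmxK unitmx_Jq ('D_(u - yt) qinv yt)) E.
move=> Yy Yz; have -> : y - z = (y - yt) - (z - yt) by rewrite opprB addrA subrK.
have dq := dqinv yt.
by rewrite deriveE // linearB /= -!deriveE // (D0 y) // (D0 z) // -mulmxBl.
Qed.

Lemma dotv_gt y z : Y y -> Y z -> dotv gt (y - z) = dotv g ('D_(y - z) qinv yt).
Proof. by move=> Yy Yz; rewrite Dqinv_yt // /Jac dotv_trmx_invmx. Qed.

Lemma hess_yt_Dqinv a b c e : Y a -> Y b -> Y c -> Y e ->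
  'D_(c - e) ('D_(a - b) Rf) yt = dotv ('D_(a - b) qinv yt) ('D_(c - e) qinv yt).
Proof.
move=> Ya Yb Yc Ye.
by rewrite derive2_hess // hess_yt dotv_gram !Dqinv_yt.
Qed.

(* Slope bound for [gap] near [yt] (see [dgap_le]): 1 comes from the term in g, G / 2 from
   the third derivative of Rf and 3 G^2 / 2 from the second derivative of qinv. *)
Local Notation Lgap := (eta * G ^+ 2 * Ghat ^+ 2 * (1 + G / 2 + 3 * G ^+ 2 / 2)).

Definition mirror_obj y := dotv gt (y - yt) + eta^-1 * bregman Rf y yt.
Definition prox_obj x := dotv g (x - xt) + (2 * eta)^-1 * enorm (x - xt) ^+ 2.

Lemma mirror_obj_growth z : Y z ->
  (2 * eta)^-1 * enorm (z - y1) ^+ 2 <= mirror_obj z - mirror_obj y1.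
Proof.
have sc : strongly_convex_on Y (eta^-1 * 1) mirror_obj.
  have -> : mirror_obj = fun y => eta^-1 * Rf y + dotv (gt - eta^-1 *: grad Rf yt) y +
      (eta^-1 * (dotv (grad Rf yt) yt - Rf yt) - dotv gt yt).
    by apply/funext => y; rewrite /mirror_obj /bregman !(dotvBr, dotvBl, dotvZl); ring.
  apply: strongly_convex_affine; first by rewrite invr_ge0 ltW.
  apply: (strongly_convex_first_order (D := grad Rf)) => // x y Yx Yy.
  by rewrite mul1r; exact: Rsc.
move=> Yz; have := strongly_convex_min_growth cY sc Yy1 y1_min Yz.
by rewrite mulr1 -invfM [eta * 2]mulrC.
Qed.

Lemma prox_obj_growth x : X x ->
  (2 * eta)^-1 * enorm (x - x1) ^+ 2 <= prox_obj x - prox_obj x1.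
Proof.
have sc : strongly_convex_on X ((2 * eta)^-1 * 2) prox_obj.
  have -> : prox_obj = fun x => (2 * eta)^-1 * enorm (x - xt) ^+ 2 + dotv g x + - dotv g xt.
    by apply/funext => y; rewrite /prox_obj dotvBr; ring.
  apply: strongly_convex_affine; first by rewrite invr_ge0 mulr_ge0 ?ltW.
  exact: strongly_convex_sqr_dist.
move=> Xx; have := strongly_convex_min_growth cX sc Xx1 x1_min Xx.
by rewrite mulfK ?pnatr_eq0.
Qed.

Lemma mirror_step_le : enorm (y1 - yt) <= G * Ghat * eta.
Proof.
have := mirror_obj_growth Yyt.
rewrite /mirror_obj /bregman !subrr !dotv0r subr0 mulr0 addr0 sub0r enorm_distC invfM.
set n := enorm (y1 - yt) => h.
have hb : eta^-1 * (2^-1 * n ^+ 2) <= eta^-1 * bregman Rf y1 yt.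
  by rewrite ler_pM2l ?invr_gt0 //; have := Rsc Yy1 Yyt; rewrite -/n /bregman; lra.
have hg : `|dotv gt (y1 - yt)| <= Ghat * (G * n).
  by rewrite dotv_gt // normr_dotv_le_mul ?Dqinv_le.
apply: le_mul_of_sqr_div_le => //; first by rewrite enorm_ge0.
  by rewrite mulr_ge0 // ltW.
move: hg hb; rewrite /bregman ler_norml => /andP[hg _]; lra.
Qed.

Lemma prox_step_le : enorm (x1 - xt) <= Ghat * eta.
Proof.
have := prox_obj_growth Xxt.
rewrite /prox_obj subrr dotv0r enorm0 expr0n mulr0 addr0 sub0r enorm_distC invfM.
set n := enorm (x1 - xt) => h.
have hg : `|dotv g (x1 - xt)| <= Ghat * n by rewrite normr_dotv_le_mul.
apply: le_mul_of_sqr_div_le => //; [exact: enorm_ge0 | exact: ltW |].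
move: hg; rewrite ler_norml => /andP[hg _]; lra.
Qed.

Lemma q_prox_step_le : enorm (q x1 - yt) <= G * Ghat * eta.
Proof.
apply: le_trans (qLip Xx1 Xxt) _.
by rewrite -mulrA ler_wpM2l ?prox_step_le // ltW.
Qed.

Definition gap y := mirror_obj y - prox_obj (qinv y).

Definition dgap y w := dotv gt w + eta^-1 * ('D_w Rf y - dotv (grad Rf yt) w)
  - (dotv g ('D_w qinv y) + eta^-1 * dotv (qinv y - xt) ('D_w qinv y)).

Lemma gap_ge :
  (2 * eta)^-1 * enorm (q x1 - y1) ^+ 2 + (2 * eta)^-1 * enorm (qinv y1 - x1) ^+ 2
    <= gap (q x1) - gap y1.
Proof.
have := mirror_obj_growth (qXY Xx1); have := prox_obj_growth (qinvYX Yy1).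
rewrite /gap qK //; lra.
Qed.

Lemma is_derive_gap y w : is_derive y w gap (dgap y w).
Proof.
have Iid : is_derive y w (fun z : V => z - yt) w by apply: is_derive_eq; rewrite subr0.
have I1 := is_derive_dotv gt Iid.
have I2 := is_derive_dotv (grad Rf yt) Iid.
have I3 : is_derive y w Rf ('D_w Rf y).
  exact/derivableP/diff_derivable/smooth_differentiable.
have Iq : is_derive y w (fun z => qinv z - xt) ('D_w qinv y).
  have Dq : is_derive y w qinv ('D_w qinv y) by exact/derivableP/diff_derivable.
  by apply: is_derive_eq; rewrite subr0.
have I4 := is_derive_dotv g Iq.
have I5 := is_derive_sqr_enorm Iq.
rewrite /gap /mirror_obj /prox_obj /bregman /dgap; apply: is_derive_eq.
by rewrite subr0 /GRing.scale /=; field; rewrite gt_eqF.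
Qed.

Lemma DR_taylor a b z : Y a -> Y b -> Y z ->
  `|'D_(b - a) Rf z - 'D_(b - a) Rf yt - dotv ('D_(b - a) qinv yt) ('D_(z - yt) qinv yt)|
    <= G * enorm (b - a) * enorm (z - yt) ^+ 2 / 2.
Proof.
move=> Ya Yb Yz; rewrite -hess_yt_Dqinv //.
apply: (normr_line_taylor1_le (f := 'D_(b - a) Rf)) => [y|y|t t01].
- exact/diff_derivable/smooth_differentiableD.
- exact/diff_derivable/smooth_differentiableDD.
- by rewrite expr2 mulrA; apply: DDDR_le; exact: convex_segment.
Qed.

Lemma qinv_taylor z : Y z ->
  enorm (qinv z - xt - 'D_(z - yt) qinv yt) <= G * enorm (z - yt) ^+ 2 / 2.
Proof.
move=> Yz; rewrite -[X in qinv z - X](qK Xxt).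
apply: (enorm_line_taylor1_le (F := qinv)) => [|y|y|t t01].
- by rewrite mulr_ge0 ?sqr_ge0 // ltW.
- exact: diff_derivable.
- exact/diff_derivable/smooth_differentiableD.
- by rewrite expr2 mulrA; apply: DDqinv_le; exact: convex_segment.
Qed.

Lemma Dqinv_lip v z : Y z ->
  enorm ('D_v qinv z - 'D_v qinv yt) <= G * enorm v * enorm (z - yt).
Proof.
move=> Yz; apply: (enorm_line_sub_le (F := 'D_v qinv)) => [|y|t t01].
- by rewrite !mulr_ge0 ?enorm_ge0 // ltW.
- exact/diff_derivable/smooth_differentiableD.
- by apply: DDqinv_le; exact: convex_segment.
Qed.

(* Regroups [dgap z v] into the Taylor remainders at [yt] of ['D_v Rf], [qinv] and
   ['D_v qinv], where [Dv0 = 'D_v qinv yt], [Dw0 = 'D_(z - yt) qinv yt] and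
   [DvX = 'D_v qinv z]. *)
Lemma taylor_split (u Dv0 Dw0 DvX qz x : V) (e DRz DRyt : R) :
  dotv u Dv0 + e * (DRz - DRyt) - (dotv u DvX + e * dotv (qz - x) DvX) =
  - dotv u (DvX - Dv0) + e * ((DRz - DRyt - dotv Dv0 Dw0) - dotv Dw0 (DvX - Dv0)
    - dotv (qz - x - Dw0) DvX).
Proof. by rewrite !(dotvBl, dotvBr) (dotvC Dv0 Dw0); ring. Qed.

Lemma dgap_le a b z : Y a -> Y b -> Y z -> enorm (z - yt) <= G * Ghat * eta ->
  dgap z (b - a) <= enorm (b - a) * Lgap.
Proof.
move=> Ya Yb Yz zB.
rewrite /dgap dotv_gt // (dotv_grad _ (smooth_differentiable _ sR)).
rewrite (taylor_split _ _ ('D_(z - yt) qinv yt)).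
have := DR_taylor Ya Yb Yz; have := qinv_taylor Yz; have := Dqinv_lip (b - a) Yz.
have := Dqinv_le (z - yt) Yyt; have := Dqinv_le (b - a) Yz.
have := enorm_ge0 (b - a); have := enorm_ge0 (z - yt); move: zB.
move: ('D_(b - a) qinv yt) ('D_(z - yt) qinv yt) ('D_(b - a) qinv z) (qinv z - xt).
move: ('D_(b - a) Rf z) ('D_(b - a) Rf yt) (enorm (b - a)) (enorm (z - yt)).
move=> DRz DRyt Nv s Dv0 Dw0 DvX B sB s0 Nv0 hDvX hDw hC hB hA.
have hgC : `|dotv g (DvX - Dv0)| <= Ghat * (G * Nv * s) by exact: normr_dotv_le_mul.
have hDC : `|dotv Dw0 (DvX - Dv0)| <= G * s * (G * Nv * s) by exact: normr_dotv_le_mul.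
have hBD : `|dotv (B - Dw0) DvX| <= G * s ^+ 2 / 2 * (G * Nv) by exact: normr_dotv_le_mul.
have c0 : 0 <= G / 2 + 3 * G ^+ 2 / 2.
  by rewrite addr_ge0 ?mulr_ge0 ?exprn_ge0 ?invr_ge0 // ltW.
have hAC : DRz - DRyt - dotv Dv0 Dw0 - dotv Dw0 (DvX - Dv0) - dotv (B - Dw0) DvX
    <= Nv * (G / 2 + 3 * G ^+ 2 / 2) * s ^+ 2.
  move: hA hDC hBD; rewrite !ler_norml => /andP[_ ?] /andP[? _] /andP[? _]; lra.
have s2 : s ^+ 2 <= (G * Ghat * eta) ^+ 2 by rewrite ler_sqr // nnegrE !mulr_ge0 // ltW.
have h1 : - dotv g (DvX - Dv0) <= Nv * (eta * G ^+ 2 * Ghat ^+ 2).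
  have : Ghat * G * Nv * s <= Ghat * G * Nv * (G * Ghat * eta).
    by rewrite ler_wpM2l // !mulr_ge0 // ltW.
  move: hgC; rewrite ler_norml => /andP[? _]; lra.
have h2 : eta^-1 * (DRz - DRyt - dotv Dv0 Dw0 - dotv Dw0 (DvX - Dv0) - dotv (B - Dw0) DvX)
    <= Nv * (eta * G ^+ 2 * Ghat ^+ 2 * (G / 2 + 3 * G ^+ 2 / 2)).
  have -> : Nv * (eta * G ^+ 2 * Ghat ^+ 2 * (G / 2 + 3 * G ^+ 2 / 2))
      = eta^-1 * (Nv * (G / 2 + 3 * G ^+ 2 / 2) * (G * Ghat * eta) ^+ 2).
    by field; rewrite gt_eqF.
  rewrite ler_wpM2l ?invr_ge0 ?(ltW eta0) //; apply: le_trans hAC _.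
  by rewrite ler_wpM2l // mulr_ge0.
lra.
Qed.

Lemma gap_le : gap (q x1) - gap y1 <= enorm (q x1 - y1) * Lgap.
Proof.
apply: (line_sub_le (f := gap)) => [y|t t01].
  by have [] := is_derive_gap y (q x1 - y1).
have [_ ->] := is_derive_gap (y1 + t *: (q x1 - y1)) (q x1 - y1).
apply: dgap_le; [exact: Yy1 | exact: qXY | exact: convex_segment cY Yy1 (qXY Xx1) t01 |].
have -> : y1 + t *: (q x1 - y1) - yt = t *: (q x1 - yt) + (1 - t) *: (y1 - yt).
  by rewrite convex_combE opprB addrA subrK addrAC.
have /andP[t0 t1] := t01; have t1' : 0 <= 1 - t by rewrite subr_ge0.
apply: le_trans (ler_enormD _ _) _; rewrite !enormZ !ger0_norm //.
have := ler_wpM2l t0 q_prox_step_le; have := ler_wpM2l t1' mirror_step_le.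
lra.
Qed.

Lemma Lgap_rate_le :
  2 * eta * Lgap * G ^+ 2 / (G ^+ 2 + 1)
    <= G ^+ 5 * (5 * Ghat ^+ 2 + Ghat ^+ 3 * eta) * eta ^+ 2.
Proof.
have G21 : 0 < G ^+ 2 + 1 by rewrite ltr_pwDr ?sqr_ge0.
rewrite ler_pdivrMr //.
have p0 : 0 <= eta ^+ 2 * G ^+ 4 * Ghat ^+ 2 by rewrite !mulr_ge0 ?exprn_ge0 ?ltW.
have hG : 0 <= (G - 1) * (5 * G ^+ 2 + 2 * G + 6).
  by rewrite mulr_ge0 ?subr_ge0 ?(ltW G1) // !addr_ge0 ?mulr_ge0 ?sqr_ge0 // ltW.
have : 2 + G + 3 * G ^+ 2 <= 5 * G * (G ^+ 2 + 1) by lra.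
move=> /(ler_wpM2l p0).
have : 0 <= G ^+ 5 * Ghat ^+ 3 * eta ^+ 3 * (G ^+ 2 + 1).
  by rewrite !mulr_ge0 ?addr_ge0 ?exprn_ge0 ?ltW.
lra.
Qed.

Lemma mirror_prox_dist_le :
  enorm (y1 - q x1) <= G ^+ 5 * (5 * Ghat ^+ 2 + Ghat ^+ 3 * eta) * eta ^+ 2.
Proof.
have Lip : enorm (q x1 - y1) <= G * enorm (x1 - qinv y1).
  by rewrite -{1}(qinvK Yy1) qLip //; exact: qinvYX.
have key : enorm (q x1 - y1) ^+ 2 + enorm (x1 - qinv y1) ^+ 2
    <= 2 * eta * Lgap * enorm (q x1 - y1).
  have := le_trans gap_ge gap_le; rewrite (enorm_distC (qinv y1)).
  have e2 : 0 < 2 * eta by rewrite mulr_gt0.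
  rewrite -(ler_pM2l e2) mulrDr !mulrA mulfV ?gt_eqF // !mul1r; lra.
rewrite enorm_distC; apply: le_trans Lgap_rate_le.
apply: (le_of_sqr_add_sqr_le (enorm_ge0 _) _ Lip key).
have c0 : 0 <= 1 + G / 2 + 3 * G ^+ 2 / 2.
  by rewrite !addr_ge0 ?divr_ge0 ?mulr_ge0 ?exprn_ge0 // ltW.
by rewrite !mulr_ge0 ?exprn_ge0 // ltW.
Qed.

End MirrorVersusGradientStep.

Theorem propositionA1 (R : realType) (d : nat)
  (X Y : set 'rV[R]_d) (q qinv : 'rV[R]_d -> 'rV[R]_d) (Rf : 'rV[R]_d -> R)
  (G eta Ghat : R) (xt : 'rV[R]_d) (g : 'rV[R]_d) (y1 x1 : 'rV[R]_d) :
  (* X, Y convex compact *)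
  convex_set_rV X -> compact X -> convex_set_rV Y -> compact Y ->
  (* q : X -> Y smooth bijection, with inverse qinv : Y -> X *)
  smooth q ->
  (forall x, X x -> Y (q x)) ->
  (forall y, Y y -> X (qinv y)) ->
  (forall x, X x -> qinv (q x) = x) ->
  (forall y, Y y -> q (qinv y) = y) ->
  (* (A1) *)
  smooth Rf ->
  (forall x y t, Y x -> Y y -> x != y -> 0 < t < 1 ->
     Rf (t *: x + (1 - t) *: y) < t * Rf x + (1 - t) * Rf y) ->
  (forall x, X x -> hess Rf (q x) \in unitmx /\
     invmx (hess Rf (q x)) = Jac q x *m (Jac q x)^T) ->
  (* (A2) *)
  1 < G ->
  (forall x x', X x -> X x' -> enorm (q x - q x') <= G * enorm (x - x')) ->
  smooth qinv ->
  (forall y u, Y y -> enorm ('D_u qinv y) <= G * enorm u) ->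
  (forall y u v, Y y -> enorm ('D_v ('D_u qinv) y) <= G * enorm u * enorm v) ->
  (forall x y, Y x -> Y y ->
     Rf x >= Rf y + dotv (grad Rf y) (x - y) + 2^-1 * enorm (x - y) ^+ 2) ->
  (forall y, Y y -> enorm (grad Rf y) <= G) ->
  (forall y u v w, Y y ->
     `|'D_w ('D_v ('D_u Rf)) y| <= G * enorm u * enorm v * enorm w) ->
  (forall z w w', Y z -> Y w -> Y w' ->
     `|bregman Rf z w - bregman Rf z w'| <= G * enorm (w - w')) ->
  (* the step *)
  0 < eta -> X xt -> 0 < Ghat -> enorm g <= Ghat ->
  let yt := q xt in
  let gt := ((invmx (Jac q xt))^T *m g^T)^T in
  Y y1 ->
  (forall y, Y y ->
     dotv gt (y1 - yt) + eta^-1 * bregman Rf y1 yt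
       <= dotv gt (y - yt) + eta^-1 * bregman Rf y yt) ->
  X x1 ->
  (forall x, X x ->
     dotv g (x1 - xt) + (2 * eta)^-1 * enorm (x1 - xt) ^+ 2
       <= dotv g (x - xt) + (2 * eta)^-1 * enorm (x - xt) ^+ 2) ->
  enorm (y1 - q x1) <= G ^+ 5 * (5 * Ghat ^+ 2 + Ghat ^+ 3 * eta) * eta ^+ 2.
Proof.
move=> cX _ cY _ sq qXY qinvYX qK qinvK sR _ hessR G1 qLip sqinv Dqinv_le DDqinv_le
  Rsc _ DDDR_le _ eta0 Xxt Ghat0 gB yt gt Yy1 y1_min Xx1 x1_min.
exact: (mirror_prox_dist_le cX cY sq qXY qinvYX qK qinvK sR hessR G1 qLip sqinv
  Dqinv_le DDqinv_le Rsc DDDR_le eta0 Xxt Ghat0 gB Yy1 y1_min Xx1 x1_min).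
Qed.
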